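(* Assume no direct effect, consistency, no interference, static features, the MAR assumption $\pi_\beta(R\mid X_{(1)})=\pi_\beta(R\mid X_o)$, and the semi-offline positivity assumption: for all $\underline x'^{T-1},\underline a'^T,x_o$, if $\prod_{t=1}^T\pi_\alpha(a'^t\mid\underline x'^{t-1},\underline a'^{t-1})\prod_{t=0}^{T-1}p'(x'^t\mid\underline x'^{t-1},a'^t,x_o)\,p(x_o)>0$ then $\pi_\beta(R\ge r'\mid x_o)>0$, where $r'$ is the indicator vector of the features acquired in $\underline a'^T$. Then $$J=\mathbb{E}_{p'}[C'_{(\pi_\alpha)}]=\sum_{C',Y,X',A',R,X_o}C'\,g(C'\mid \underline X'^{T-1},\underline A'^T,Y)\,p'(Y\mid\underline X'^{T-1},\underline A'^T,X_o)\,q'(\underline X'^{T-1},\underline A'^T,R,X_o),$$ with $$q'(\underline X'^{T-1},\underline A'^T,R,X_o)=\pi_\beta(R\mid R\ge R',X_o)\prod_{t=1}^T\pi_\alpha(A'^t\mid\underline X'^{t-1},\underline A'^{t-1})\prod_{t=0}^{T-1}p'(X'^t\mid\underline X'^{t-1},A'^t,X_o)\,p(X_o),$$ so $J$ is identified from the observed data distribution.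
   Context: Setting: full feature vector $X_{(1)}\in\mathbb{R}^{d_x}$ (finitely valued), label $Y$, missingness indicators $R\in\{0,1\}^{d_x}$ with mechanism $\pi_\beta(R\mid X_{(1)})$, observed features $X_i=X_{(1),i}$ if $R_i=1$ and ''?'' otherwise. $X_o$ is a fixed subset of coordinates that is always observed in the retrospective data ($R_i=1$ a.s. for those coordinates). An AFA policy $\pi_\alpha(A^t\mid\underline X^{t-1},\underline A^{t-1})$ chooses $A^t\in\{1,\dots,d_x+1\}$ ($i\le d_x$ reveals $X_{(1),i}$; $d_x+1$ stops at step $T$), starting from free features $X^0$; $\underline X^t=(X^0,\dots,X^t)$, $\underline A^t=(A^1,\dots,A^t)$. Deterministic classifier and misclassification cost give $g(C'\mid\underline X'^{T-1},\underline A'^T,Y)$; $J=\mathbb{E}[C_{(\pi_\alpha)}]$. Blocked policy and semi-offline sampling distribution: a blocked version $\pi'_{sim}(A'^t\mid\underline X'^{t-1},\underline A'^{t-1},R)$ of a simulation policy $\pi_{sim}$ assigns probability $0$ to acquiring any feature $i$ with $R_i=0$, and positive probability to every action that $\pi_{sim}$ gives positive probability and that is either stopping or acquiring an available feature; $p'$ is the joint distribution of $(X_{(1)},Y,R)\sim p$ together with simulated features $X'^t=X_{(1),A'^t}$, actions $A'^t\sim\pi'_{sim}$ and cost $C'$; $\pi_{sim}$ satisfies off-policy positivity with respect to $\pi_\alpha$. $C'_{(\pi_\alpha)}$ denotes the potential outcome of $C'$ had $\pi_\alpha$ replaced $\pi'_{sim}$. $R'^t$ denotes the indicator vector of the features acquired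 by $\underline A'^t$, $R'=R'^T$, and $r\ge r'$ means $r_i\ge r'_i$ for all $i$. Note $p'(X'^t\mid\underline X'^{t-1},A'^t,X_o)=p(X_{(1),a'^t}\mid X_{(1),r'^{t-1}},X_o)$. *)

From HB Require Import structures.
From mathcomp Require Import all_boot all_order all_algebra.
Set Implicit Arguments. Unset Strict Implicit. Unset Printing Implicit Defensive.
Import Order.TTheory GRing.Theory Num.Theory.
Local Open Scope ring_scope.

(* Conventions:
   - features are indexed by 'I_dx and take values in a common finite type V;
   - full feature vector  x : {ffun 'I_dx -> V};
   - a partially observed vector / sub-vector is  {ffun 'I_dx -> option V};
   - missingness indicator  r : {ffun 'I_dx -> bool};
   - action  a : option 'I_dx  (Some i = acquire feature i, None = stop);
   - history of acquisitions  h : seq ('I_dx * V)  (feature, value), i.e.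
     (A'^1,X'^1),...,(A'^{t},X'^{t}); the free features X'^0 are a
     separate argument x0 : {ffun 'I_dx -> option V};
   - division by 0 is 0 (MathComp convention) for conditionals. *)

Section AFA.
Variables (R : realFieldType) (V Ylab Cst : finType) (dx : nat).

Definition fvec := {ffun 'I_dx -> V}.
Definition pvec := {ffun 'I_dx -> option V}.
Definition rvec := {ffun 'I_dx -> bool}.
Definition hist := seq ('I_dx * V).
Definition act := option 'I_dx.

Definition restr (S : {set 'I_dx}) (x : fvec) : pvec :=
  [ffun i => if i \in S then Some (x i) else None].

Definition consistent (x : fvec) (h : hist) : bool :=
  all (fun av => x av.1 == av.2) h.

Definition acquired (h : hist) : rvec := [ffun i => i \in map fst h].

Definition geR (r r' : rvec) : bool := [forall i, r' i ==> r i].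

Definition polprod (pi : pvec -> hist -> act -> R) (x0 : pvec) (h : hist) : R :=
  \prod_(t < size h) pi x0 (take t h) (Some (tnth (in_tuple h) t).1).

Definition trajprob (pi : pvec -> hist -> act -> R) (x0 : pvec) (h : hist) : R :=
  polprod pi x0 h * pi x0 h None.

Variables (N : nat) (o F0 : {set 'I_dx}).
Variables (p : fvec -> Ylab -> R)
          (piB : rvec -> fvec -> R)
          (piA : pvec -> hist -> act -> R)
          (piSb : pvec -> hist -> rvec -> act -> R) (* blocked pi'_sim *)
          (g : pvec -> hist -> Ylab -> Cst -> R)
          (cv : Cst -> R).                           (* numerical value of a cost *)

Definition expcost (x0 : pvec) (h : hist) (y : Ylab) : R :=
  \sum_(c : Cst) cv c * g x0 h y c.

(* inner expectation over trajectories of pi_alpha acting on the full vector x,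
   trajectories of length at most N (the horizon) *)
Definition trajcost (x : fvec) (y : Ylab) : R :=
  \sum_(n < N.+1) \sum_(h : n.-tuple ('I_dx * V) | consistent x h)
     trajprob piA (restr F0 x) h * expcost (restr F0 x) h y.

Definition Jval : R := \sum_(x : fvec) \sum_(y : Ylab) p x y * trajcost x y.

(* E_{p'}[C'_(pi_alpha)] : (X_(1),Y,R) ~ p', pi_alpha replacing pi'_sim,
   features simulated as X'^t = X_(1),A'^t (static features, consistency) *)
Definition Epo : R :=
  \sum_(x : fvec) \sum_(y : Ylab) \sum_(r : rvec) p x y * piB r x * trajcost x y.

(* p'(X'^0 = x0, (A'^t,X'^t)_{t<=|h|} = h, X_o = xo) *)
Definition Ppre (x0 : pvec) (h : hist) (xo : pvec) : R :=
  \sum_(x : fvec) \sum_(y : Ylab) \sum_(r : rvec)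
    p x y * piB r x * (restr F0 x == x0)%:R * (restr o x == xo)%:R
      * (consistent x h)%:R * \prod_(t < size h)
          piSb x0 (take t h) r (Some (tnth (in_tuple h) t).1).

(* p'(Y = y, X'^0 = x0, history h, A'^T = stop, X_o = xo) *)
Definition PpreY (y : Ylab) (x0 : pvec) (h : hist) (xo : pvec) : R :=
  \sum_(x : fvec) \sum_(r : rvec)
    p x y * piB r x * (restr F0 x == x0)%:R * (restr o x == xo)%:R
      * (consistent x h)%:R * (\prod_(t < size h)
          piSb x0 (take t h) r (Some (tnth (in_tuple h) t).1))
      * piSb x0 h r None.

Definition pc0 (x0 xo : pvec) : R :=
  Ppre x0 [::] xo / \sum_(z : pvec) Ppre z [::] xo.

(* p'(X'^t = v | X'^{<t}, A'^{<t} (= hprev, x0), A'^t = a, X_o = xo) *)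
Definition pcstep (x0 : pvec) (hprev : hist) (a : 'I_dx) (v : V) (xo : pvec) : R :=
  Ppre x0 (rcons hprev (a, v)) xo / \sum_(w : V) Ppre x0 (rcons hprev (a, w)) xo.

Definition pcprod (x0 : pvec) (h : hist) (xo : pvec) : R :=
  pc0 x0 xo * \prod_(t < size h)
     pcstep x0 (take t h) (tnth (in_tuple h) t).1 (tnth (in_tuple h) t).2 xo.

Definition pcY (y : Ylab) (x0 : pvec) (h : hist) (xo : pvec) : R :=
  PpreY y x0 h xo / \sum_(y' : Ylab) PpreY y' x0 h xo.

Definition p_o (xo : pvec) : R :=
  \sum_(x : fvec) \sum_(y : Ylab) p x y * (restr o x == xo)%:R.

Definition pRo (r : rvec) (xo : pvec) : R :=
  \sum_(x : fvec) \sum_(y : Ylab) p x y * piB r x * (restr o x == xo)%:R.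

Definition piB_cond_ge (r r' : rvec) (xo : pvec) : R :=
  (geR r r')%:R * pRo r xo / \sum_(s : rvec | geR s r') pRo s xo.

Definition piB_ge (r' : rvec) (xo : pvec) : R :=
  (\sum_(s : rvec | geR s r') pRo s xo) / p_o xo.

Definition qprime (x0 : pvec) (h : hist) (r : rvec) (xo : pvec) : R :=
  piB_cond_ge r (acquired h) xo * trajprob piA x0 h * pcprod x0 h xo * p_o xo.

Definition Jformula : R :=
  \sum_(c : Cst) \sum_(y : Ylab) \sum_(x0 : pvec) \sum_(n < N.+1)
   \sum_(h : n.-tuple ('I_dx * V)) \sum_(r : rvec) \sum_(xo : pvec)
     cv c * g x0 h y c * pcY y x0 h xo * qprime x0 h r xo.

(* ---- the same conditionals p(X'^t | X'^{<t}, A'^t, X_o) computed in the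
   full-data process (= p(X_(1),a'^t | X_(1),r'^{t-1}, X'^0, X_o)), used in
   the semi-offline positivity assumption ---- *)
Definition Pfull (x0 : pvec) (h : hist) (xo : pvec) : R :=
  \sum_(x : fvec) \sum_(y : Ylab)
    p x y * (restr F0 x == x0)%:R * (restr o x == xo)%:R * (consistent x h)%:R.

Definition pfprod (x0 : pvec) (h : hist) (xo : pvec) : R :=
  (Pfull x0 [::] xo / p_o xo) * \prod_(t < size h)
     (Pfull x0 (take t.+1 h) xo / Pfull x0 (take t h) xo).

End AFA.

From HB Require Import structures.
From mathcomp Require Import all_boot all_order all_algebra.
From mathcomp Require Import ring.
Set Implicit Arguments. Unset Strict Implicit. Unset Printing Implicit Defensive.
Import Order.TTheory GRing.Theory Num.Theory.
Local Open Scope ring_scope.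

(* Under MAR, pi_beta(r | x) depends on x only through x_o, so it factors out of
   every joint probability of the semi-offline distribution p': the probability of
   a simulated history h equals the full-data probability of observing h times the
   weight sum_r pi_beta(r | x_o) pi'_sim(actions of h | r).  That weight cancels in
   each conditional of p', so p'(X'^t | ...) and p'(Y | ...) are the full-data
   conditionals, and their product telescopes to the full-data probability of h.
   Semi-offline positivity is what makes the weights positive, i.e. rules out 0/0,
   on every history that pi_alpha can produce; summing out R then recovers J. *)

Lemma sum_indicator_mulr (R : pzSemiRingType) (T : finType) (a : T) (f : T -> R) :
  \sum_(z : T) (a == z)%:R * f z = f a.
Proof.
rewrite (bigD1 a) //= eqxx mul1r big1 ?addr0 // => z nz.
by rewrite eq_sym (negbTE nz) mul0r.
Qed.

Lemma psumr_gt0 (R : numDomainType) (I : finType) (F : I -> R) (i : I) :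
  (forall j, 0 <= F j) -> 0 < F i -> 0 < \sum_j F j.
Proof.
move=> F_ge0 Fi_gt0; rewrite (bigD1 i) //=.
by apply: ltr_wpDr => //; apply: sumr_ge0.
Qed.

Lemma prodr_gt0_factor (R : numDomainType) (n : nat) (F : 'I_n -> R) :
  (forall i, 0 <= F i) -> 0 < \prod_(i < n) F i -> forall i, 0 < F i.
Proof.
move=> F_ge0 prod_gt0 i; rewrite lt_def F_ge0 andbT; apply/eqP => Fi0.
by move: prod_gt0; rewrite (bigD1 i) //= Fi0 mul0r ltxx.
Qed.

Definition prefix_prod (R : pzSemiRingType) (X : Type) (F : seq X -> X -> R)
    (s : seq X) : R :=
  \prod_(t < size s) F (take t s) (tnth (in_tuple s) t).

Lemma prefix_prod_nth (R : pzSemiRingType) (X : Type) (F : seq X -> X -> R)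
    (s : seq X) (z : X) :
  prefix_prod F s = \prod_(t < size s) F (take t s) (nth z s t).
Proof. by apply: eq_bigr => t _; rewrite (tnth_nth z). Qed.

Lemma prefix_prod_rcons (R : comPzSemiRingType) (X : Type) (F : seq X -> X -> R)
    (s : seq X) (z : X) :
  prefix_prod F (rcons s z) = prefix_prod F s * F s z.
Proof.
rewrite !(prefix_prod_nth _ _ z) size_rcons big_ord_recr /=.
rewrite nth_rcons ltnn eqxx -cats1 take_size_cat //; congr (_ * _).
by apply: eq_bigr => t _; rewrite takel_cat ?nth_cat ?ltn_ord // ltnW.
Qed.

Lemma prefix_prod_take_gt0 (R : numDomainType) (X : Type) (F : seq X -> X -> R)
    (s : seq X) (k : nat) :
  (forall t : 'I_(size s), 0 < F (take t s) (tnth (in_tuple s) t)) ->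
  (k <= size s)%N -> 0 < prefix_prod F (take k s).
Proof.
move=> F_gt0; elim: k => [|k IHk] lt_k_s; first by rewrite take0 /prefix_prod big_ord0.
pose z := tnth (in_tuple s) (Ordinal lt_k_s).
rewrite (take_nth z lt_k_s) prefix_prod_rcons mulr_gt0 ?IHk 1?ltnW //.
by have := F_gt0 (Ordinal lt_k_s); rewrite (tnth_nth z).
Qed.

Lemma consistent_take (V : finType) dx (x : fvec V dx) (h : hist V dx) t :
  consistent x h -> consistent x (take t h).
Proof. by rewrite /consistent -{1}(cat_take_drop t h) all_cat => /andP[]. Qed.

Lemma mulr_gt0_inv (R : numDomainType) (a b : R) :
  0 <= a -> 0 <= b -> 0 < a * b -> 0 < a /\ 0 < b.
Proof.
move=> a_ge0 b_ge0 ab_gt0; rewrite !lt_def a_ge0 b_ge0 !andbT.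
by split; apply: contraTneq ab_gt0 => ->; rewrite (mul0r, mulr0) ltxx.
Qed.

Lemma prodf_telescope0 (F : fieldType) (n : nat) (f : nat -> F) :
  (forall k, (k <= n)%N -> f k != 0) -> \prod_(t < n) (f t.+1 / f t) = f n / f 0%N.
Proof.
case: n => [|n] f_neq0; first by rewrite big_ord0 divff ?f_neq0.
rewrite -(big_mkord xpredT (fun t => f t.+1 / f t)) telescope_prodf //.
by move=> k /andP[_ /ltnW/f_neq0].
Qed.

Section SemiOfflineIdentification.

Variables (R : realFieldType) (V Ylab Cst : finType) (dx N : nat) (o F0 : {set 'I_dx}).
Variables (p : fvec V dx -> Ylab -> R) (piB : rvec dx -> fvec V dx -> R)
  (piA piS : pvec V dx -> hist V dx -> act dx -> R)
  (piSb : pvec V dx -> hist V dx -> rvec dx -> act dx -> R)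
  (g : pvec V dx -> hist V dx -> Ylab -> Cst -> R) (cv : Cst -> R).

Hypothesis p_ge0 : forall x y, 0 <= p x y.
Hypothesis piB_ge0 : forall r x, 0 <= piB r x.
Hypothesis piB_sum1 : forall x, \sum_(r : rvec dx) piB r x = 1.
Hypothesis MAR : forall r x x', 0 < \sum_(y : Ylab) p x y ->
  0 < \sum_(y : Ylab) p x' y -> restr o x = restr o x' -> piB r x = piB r x'.
Hypothesis piA_ge0 : forall x0 h a, 0 <= piA x0 h a.
Hypothesis piSb_ge0 : forall x0 h r a, 0 <= piSb x0 h r a.
Hypothesis piSb_pos : forall x0 h (r : rvec dx) (a : act dx), 0 < piS x0 h a ->
  (if a is Some i then r i else true) -> 0 < piSb x0 h r a.
Hypothesis offpol_pos : forall x0 h a, 0 < piA x0 h a -> 0 < piS x0 h a.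
Hypothesis semioff_pos : forall x0 h xo,
  0 < trajprob piA x0 h * pfprod o F0 p x0 h xo * p_o o p xo ->
  0 < piB_ge o p piB (acquired h) xo.

Definition piB_given_o (r : rvec dx) (xo : pvec V dx) : R :=
  pRo o p piB r xo / p_o o p xo.

Definition PfullY (y : Ylab) (x0 : pvec V dx) (h : hist V dx) (xo : pvec V dx) : R :=
  \sum_(x : fvec V dx) p x y * (restr F0 x == x0)%:R * (restr o x == xo)%:R
    * (consistent x h)%:R.

(* [blocked_prob x0 h r] is the probability that the blocked simulation policy
   replays the acquisitions of [h] when [R = r]; its mixtures over
   [pi_beta(. | x_o)] are the factors by which the joint probabilities [Ppre] and
   [PpreY] of p' differ from their full-data counterparts. *)
Definition blocked_prob (x0 : pvec V dx) (h : hist V dx) (r : rvec dx) : R :=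
  prefix_prod (fun hh av => piSb x0 hh r (Some av.1)) h.

Definition blocked_weight (x0 : pvec V dx) (h : hist V dx) (xo : pvec V dx) : R :=
  \sum_(r : rvec dx) piB_given_o r xo * blocked_prob x0 h r.

Definition blocked_stop_weight (x0 : pvec V dx) (h : hist V dx) (xo : pvec V dx) : R :=
  \sum_(r : rvec dx) piB_given_o r xo * blocked_prob x0 h r * piSb x0 h r None.

Lemma sum_p_eq0 x : \sum_(y : Ylab) p x y = 0 -> forall y, p x y = 0.
Proof. by move=> /psumr_eq0P p_eq0 y; apply: p_eq0. Qed.

Lemma p_o_gt0 x : 0 < \sum_(y : Ylab) p x y -> 0 < p_o o p (restr o x).
Proof.
move=> px_gt0; apply: (psumr_gt0 (i := x)) => [x'|].
  by apply: sumr_ge0 => y _; rewrite mulr_ge0.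
by rewrite eqxx; under eq_bigr do rewrite mulr1.
Qed.

Lemma piB_MAR x x' y r : 0 < \sum_(y : Ylab) p x y ->
  p x' y * piB r x' * (restr o x' == restr o x)%:R =
  piB r x * (p x' y * (restr o x' == restr o x)%:R).
Proof.
move=> px_gt0; case: eqP => [eq_o|_]; last by rewrite !mulr0.
rewrite !mulr1; have [px'_eq0|px'_neq0] := eqVneq (\sum_(y : Ylab) p x' y) 0.
  by rewrite (sum_p_eq0 px'_eq0 y) !(mul0r, mulr0).
have px'_gt0 : 0 < \sum_(y : Ylab) p x' y by rewrite lt_def px'_neq0 sumr_ge0.
by rewrite (MAR r px'_gt0 px_gt0 eq_o) mulrC.
Qed.

Lemma pRo_MAR x r : 0 < \sum_(y : Ylab) p x y ->
  pRo o p piB r (restr o x) = piB r x * p_o o p (restr o x).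
Proof.
move=> px_gt0; rewrite /pRo /p_o big_distrr; apply: eq_bigr => x' _.
by rewrite big_distrr; apply: eq_bigr => y _; apply: piB_MAR.
Qed.

Lemma piB_given_o_factor x y r xo :
  p x y * piB r x * (restr o x == xo)%:R =
  piB_given_o r xo * (p x y * (restr o x == xo)%:R).
Proof.
case: eqP => [<-|_]; last by rewrite !mulr0.
have [px_eq0|px_neq0] := eqVneq (\sum_(y : Ylab) p x y) 0.
  by rewrite (sum_p_eq0 px_eq0 y) !(mul0r, mulr0).
have px_gt0 : 0 < \sum_(y : Ylab) p x y by rewrite lt_def px_neq0 sumr_ge0.
by rewrite /piB_given_o pRo_MAR // mulfK ?gt_eqF ?p_o_gt0 // !mulr1 mulrC.
Qed.

Lemma sum_piB_factor x y xo (w : rvec dx -> R) :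
  \sum_(r : rvec dx) p x y * piB r x * (restr o x == xo)%:R * w r =
  (\sum_(r : rvec dx) piB_given_o r xo * w r) * (p x y * (restr o x == xo)%:R).
Proof.
by rewrite big_distrl; apply: eq_bigr => r _; rewrite piB_given_o_factor mulrAC.
Qed.

Lemma Ppre_factor x0 h xo :
  Ppre o F0 p piB piSb x0 h xo = blocked_weight x0 h xo * Pfull o F0 p x0 h xo.
Proof.
rewrite /Ppre /Pfull mulr_sumr; apply: eq_bigr => x _.
rewrite mulr_sumr; apply: eq_bigr => y _.
transitivity ((\sum_(r : rvec dx) p x y * piB r x * (restr o x == xo)%:R
    * blocked_prob x0 h r) * ((restr F0 x == x0)%:R * (consistent x h)%:R)).
  rewrite big_distrl; apply: eq_bigr => r _ /=.
  by rewrite /blocked_prob /prefix_prod; ring.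
by rewrite sum_piB_factor -/(blocked_weight x0 h xo); ring.
Qed.

Lemma PpreY_factor y x0 h xo :
  PpreY o F0 p piB piSb y x0 h xo = blocked_stop_weight x0 h xo * PfullY y x0 h xo.
Proof.
rewrite /PpreY /PfullY mulr_sumr; apply: eq_bigr => x _.
transitivity ((\sum_(r : rvec dx) p x y * piB r x * (restr o x == xo)%:R
    * (blocked_prob x0 h r * piSb x0 h r None))
    * ((restr F0 x == x0)%:R * (consistent x h)%:R)).
  rewrite big_distrl; apply: eq_bigr => r _ /=.
  by rewrite /blocked_prob /prefix_prod; ring.
by rewrite sum_piB_factor /blocked_stop_weight; under eq_bigr do rewrite mulrA; ring.
Qed.

Lemma p_o_ge0 xo : 0 <= p_o o p xo.
Proof. by apply: sumr_ge0 => x _; apply: sumr_ge0 => y _; rewrite mulr_ge0. Qed.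

Lemma pRo_ge0 r xo : 0 <= pRo o p piB r xo.
Proof. by apply: sumr_ge0 => x _; apply: sumr_ge0 => y _; rewrite !mulr_ge0. Qed.

Lemma piB_given_o_ge0 r xo : 0 <= piB_given_o r xo.
Proof. by rewrite divr_ge0 ?pRo_ge0 ?p_o_ge0. Qed.

Lemma Pfull_ge0 x0 h xo : 0 <= Pfull o F0 p x0 h xo.
Proof. by apply: sumr_ge0 => x _; apply: sumr_ge0 => y _; rewrite !mulr_ge0. Qed.

Lemma PfullY_ge0 y x0 h xo : 0 <= PfullY y x0 h xo.
Proof. by apply: sumr_ge0 => x _; rewrite !mulr_ge0. Qed.

Lemma sum_PfullY x0 h xo :
  \sum_(y : Ylab) PfullY y x0 h xo = Pfull o F0 p x0 h xo.
Proof. exact: exchange_big. Qed.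

Lemma Ppre_nil x0 xo : Ppre o F0 p piB piSb x0 [::] xo = Pfull o F0 p x0 [::] xo.
Proof.
apply: eq_bigr => x _; apply: eq_bigr => y _.
rewrite -[RHS]mulr1 -[X in _ * X](piB_sum1 x) mulr_sumr.
by apply: eq_bigr => r _; rewrite big_ord0; ring.
Qed.

Lemma sum_Pfull_nil xo :
  \sum_(x0 : pvec V dx) Pfull o F0 p x0 [::] xo = p_o o p xo.
Proof.
rewrite exchange_big; apply: eq_bigr => x _; rewrite exchange_big.
apply: eq_bigr => y _.
rewrite -(sum_indicator_mulr (restr F0 x) (fun=> p x y * (restr o x == xo)%:R)).
by apply: eq_bigr => x0 _; rewrite /consistent /=; ring.
Qed.

Lemma sum_Pfull_rcons x0 h a xo :
  \sum_(v : V) Pfull o F0 p x0 (rcons h (a, v)) xo = Pfull o F0 p x0 h xo.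
Proof.
rewrite exchange_big; apply: eq_bigr => x _; rewrite exchange_big.
apply: eq_bigr => y _; rewrite -(sum_indicator_mulr (x a) (fun=> p x y
  * (restr F0 x == x0)%:R * (restr o x == xo)%:R * (consistent x h)%:R)).
apply: eq_bigr => v _; rewrite /consistent all_rcons /=.
by case: (x a == v); rewrite ?mul1r ?mul0r ?mulr0 ?mulr1.
Qed.

Lemma Pfull_le_take x0 h xo k :
  Pfull o F0 p x0 h xo <= Pfull o F0 p x0 (take k h) xo.
Proof.
apply: ler_sum => x _; apply: ler_sum => y _; rewrite ler_wpM2l ?mulr_ge0 //.
by case: (boolP (consistent x h)) => [/(consistent_take k)->|].
Qed.

Lemma Pfull_le_p_o x0 h xo : Pfull o F0 p x0 h xo <= p_o o p xo.
Proof.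
apply: ler_sum => x _; apply: ler_sum => y _.
rewrite (_ : _ * _ = p x y * (restr o x == xo)%:R
  * ((restr F0 x == x0)%:R * (consistent x h)%:R)); last by ring.
by rewrite ler_piMr ?mulr_ge0 // mulr_ile1 ?ler0n // lern1 leq_b1.
Qed.

Lemma pc0_eq x0 xo :
  pc0 o F0 p piB piSb x0 xo = Pfull o F0 p x0 [::] xo / p_o o p xo.
Proof.
rewrite /pc0 Ppre_nil; under eq_bigr do rewrite Ppre_nil.
by rewrite sum_Pfull_nil.
Qed.

Lemma blocked_weight_rcons x0 h a v xo :
  blocked_weight x0 (rcons h (a, v)) xo =
  \sum_(r : rvec dx) piB_given_o r xo * blocked_prob x0 h r * piSb x0 h r (Some a).
Proof. by apply: eq_bigr => r _; rewrite /blocked_prob prefix_prod_rcons mulrA. Qed.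

Lemma blocked_prob_ge0 x0 h r : 0 <= blocked_prob x0 h r.
Proof. exact: prodr_ge0. Qed.

Lemma blocked_weight_gt0 x0 h xo s :
  0 < piB_given_o s xo -> 0 < blocked_prob x0 h s -> 0 < blocked_weight x0 h xo.
Proof.
move=> piBs_gt0 blocked_gt0; apply: (psumr_gt0 (i := s)); last exact: mulr_gt0.
by move=> r; apply: mulr_ge0; [apply: piB_given_o_ge0 | apply: blocked_prob_ge0].
Qed.

Lemma blocked_stop_weight_gt0 x0 h xo s :
  0 < piB_given_o s xo -> 0 < blocked_prob x0 h s ->
  0 < piSb x0 h s None -> 0 < blocked_stop_weight x0 h xo.
Proof.
move=> piBs_gt0 blocked_gt0 stop_gt0; apply: (psumr_gt0 (i := s)).
  move=> r; apply: mulr_ge0; last exact: piSb_ge0.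
  by apply: mulr_ge0; [apply: piB_given_o_ge0 | apply: blocked_prob_ge0].
by apply: mulr_gt0 => //; apply: mulr_gt0.
Qed.

Lemma pcstep_eq x0 h a v xo : 0 < blocked_weight x0 (rcons h (a, v)) xo ->
  pcstep o F0 p piB piSb x0 h a v xo =
  Pfull o F0 p x0 (rcons h (a, v)) xo / Pfull o F0 p x0 h xo.
Proof.
rewrite blocked_weight_rcons => weight_gt0.
rewrite /pcstep Ppre_factor blocked_weight_rcons.
under [X in _ / X]eq_bigr do rewrite Ppre_factor blocked_weight_rcons.
by rewrite -mulr_sumr sum_Pfull_rcons -mulf_div divff ?mul1r ?gt_eqF.
Qed.

Lemma pcY_eq y x0 h xo : 0 < blocked_stop_weight x0 h xo ->
  pcY o F0 p piB piSb y x0 h xo = PfullY y x0 h xo / Pfull o F0 p x0 h xo.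
Proof.
move=> weight_gt0; rewrite /pcY PpreY_factor.
under [X in _ / X]eq_bigr do rewrite PpreY_factor.
by rewrite -mulr_sumr sum_PfullY -mulf_div divff ?mul1r ?gt_eqF.
Qed.

Lemma pcprod_eq_pfprod x0 h xo :
  (forall t : 'I_(size h), 0 < blocked_weight x0 (take t.+1 h) xo) ->
  pcprod o F0 p piB piSb x0 h xo = pfprod o F0 p x0 h xo.
Proof.
move=> weight_gt0; rewrite /pcprod /pfprod pc0_eq; congr (_ * _).
apply: eq_bigr => t _; pose z := tnth (in_tuple h) t.
have take_S : take t.+1 h = rcons (take t h) (z.1, z.2).
  by rewrite -surjective_pairing (take_nth z) // {2}/z (tnth_nth z).
by rewrite pcstep_eq -take_S // weight_gt0.
Qed.

Lemma pfprod_eq x0 h xo : 0 < Pfull o F0 p x0 h xo ->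
  pfprod o F0 p x0 h xo = Pfull o F0 p x0 h xo / p_o o p xo.
Proof.
move=> P_gt0; have P_take_neq0 k : Pfull o F0 p x0 (take k h) xo != 0.
  by rewrite gt_eqF // (lt_le_trans P_gt0) ?Pfull_le_take.
rewrite /pfprod (prodf_telescope0 (f := fun k => Pfull o F0 p x0 (take k h) xo)) //.
rewrite take_size take0 mulrC mulf_div [_ * Pfull _ _ _ _ _ _]mulrC -mulf_div.
by rewrite divff ?mul1r // -(take0 h).
Qed.

Lemma sum_piB_cond_ge r' xo : 0 < piB_ge o p piB r' xo ->
  \sum_(r : rvec dx) piB_cond_ge o p piB r r' xo = 1.
Proof.
rewrite /piB_ge /piB_cond_ge -mulr_suml => ge_gt0.
rewrite [X in X / _](_ : _ = \sum_(s | geR s r') pRo o p piB s xo) ?divff //.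
  by apply: contraTneq ge_gt0 => ->; rewrite mul0r ltxx.
by rewrite [RHS]big_mkcond; apply: eq_bigr => s _; case: geR; rewrite (mul1r, mul0r).
Qed.

Lemma sum_qprime x0 h xo : 0 < piB_ge o p piB (acquired h) xo ->
  \sum_(r : rvec dx) qprime o F0 p piB piA piSb x0 h r xo =
  trajprob piA x0 h * pcprod o F0 p piB piSb x0 h xo * p_o o p xo.
Proof.
move=> ge_gt0; rewrite (eq_bigr (fun r => piB_cond_ge o p piB r (acquired h) xo
  * (trajprob piA x0 h * pcprod o F0 p piB piSb x0 h xo * p_o o p xo))).
  by rewrite -mulr_suml sum_piB_cond_ge // mul1r.
by move=> r _; rewrite /qprime; ring.
Qed.

Lemma piB_ge_witness r' xo : 0 < piB_ge o p piB r' xo ->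
  exists2 s, geR s r' & 0 < piB_given_o s xo.
Proof.
rewrite /piB_ge => ge_gt0.
have po_gt0 : 0 < p_o o p xo.
  rewrite lt_def p_o_ge0 andbT.
  by apply: contraTneq ge_gt0 => ->; rewrite invr0 mulr0 ltxx.
have : \sum_(s | geR s r') pRo o p piB s xo != 0.
  by apply: contraTneq ge_gt0 => ->; rewrite mul0r ltxx.
rewrite psumr_neq0 => [/hasP[s _ /andP[ge_s pRo_gt0]]|s _]; last exact: pRo_ge0.
by exists s => //; rewrite divr_gt0.
Qed.

Lemma blocked_prob_take_gt0 x0 h s k :
  0 < polprod piA x0 h -> geR s (acquired h) -> (k <= size h)%N ->
  0 < blocked_prob x0 (take k h) s.
Proof.
move=> pol_gt0 /forallP ge_s; apply: prefix_prod_take_gt0 => t.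
apply: piSb_pos; first by apply/offpol_pos/(prodr_gt0_factor _ pol_gt0).
by apply: (implyP (ge_s _)); rewrite ffunE map_f ?mem_tnth.
Qed.

Lemma pcY_sum_qprime y x0 h xo :
  pcY o F0 p piB piSb y x0 h xo * \sum_(r : rvec dx) qprime o F0 p piB piA piSb x0 h r xo
  = trajprob piA x0 h * PfullY y x0 h xo.
Proof.
(* Off the support of the trajectory both sides vanish, whatever junk value the
   0/0 conditionals take. *)
have T_ge0 : 0 <= trajprob piA x0 h by rewrite mulr_ge0 ?prodr_ge0.
have [T_eq0|T_neq0] := eqVneq (trajprob piA x0 h) 0.
  by rewrite T_eq0 mul0r big1 ?mulr0 // => r _; rewrite /qprime T_eq0 mulr0 !mul0r.
have [P_eq0|P_neq0] := eqVneq (Pfull o F0 p x0 h xo) 0.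
  have PY_eq0 : PfullY y x0 h xo = 0.
    move: P_eq0; rewrite -sum_PfullY => /psumr_eq0P.
    by apply=> // y' _; apply: PfullY_ge0.
  by rewrite /pcY PpreY_factor PY_eq0 !(mulr0, mul0r).
have T_gt0 : 0 < trajprob piA x0 h by rewrite lt_def T_neq0.
have P_gt0 : 0 < Pfull o F0 p x0 h xo by rewrite lt_def P_neq0 Pfull_ge0.
have po_gt0 : 0 < p_o o p xo by apply: lt_le_trans P_gt0 (Pfull_le_p_o _ _ _).
have ge_gt0 : 0 < piB_ge o p piB (acquired h) xo.
  apply: (semioff_pos (x0 := x0)).
  by rewrite pfprod_eq // mulrA divfK ?gt_eqF // mulr_gt0.
(* A missingness pattern s >= R' of positive probability lets the blocked policy
   follow pi_alpha along h, which makes all the weights positive. *)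
have [s ge_s piBs_gt0] := piB_ge_witness ge_gt0.
have [pol_gt0 stop_gt0] : 0 < polprod piA x0 h /\ 0 < piA x0 h None.
  by apply: mulr_gt0_inv; rewrite ?prodr_ge0.
have blocked_gt0 k : (k <= size h)%N -> 0 < blocked_prob x0 (take k h) s.
  exact: blocked_prob_take_gt0.
have blocked_h_gt0 : 0 < blocked_prob x0 h s.
  by rewrite -[h in blocked_prob _ h]take_size blocked_gt0.
rewrite pcY_eq; last first.
  apply: (blocked_stop_weight_gt0 piBs_gt0 blocked_h_gt0).
  by rewrite piSb_pos ?offpol_pos.
rewrite sum_qprime // pcprod_eq_pfprod ?pfprod_eq //; last first.
  by move=> t; apply: (blocked_weight_gt0 piBs_gt0); rewrite blocked_gt0.
by field; rewrite !gt_eqF.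
Qed.

Lemma Jval_eq_Epo : Jval N F0 p piA g cv = Epo N F0 p piB piA g cv.
Proof.
apply: eq_bigr => x _; apply: eq_bigr => y _.
by rewrite -mulr_suml -mulr_sumr piB_sum1 mulr1.
Qed.

Definition J_traj : R :=
  \sum_(y : Ylab) \sum_(x0 : pvec V dx) \sum_(n < N.+1) \sum_(h : n.-tuple ('I_dx * V))
    \sum_(xo : pvec V dx) expcost g cv x0 h y * trajprob piA x0 h * PfullY y x0 h xo.

Lemma Jformula_eq_traj : Jformula N o F0 p piB piA piSb g cv = J_traj.
Proof.
rewrite /Jformula exchange_big; apply: eq_bigr => y _.
rewrite exchange_big; apply: eq_bigr => x0 _.
rewrite exchange_big; apply: eq_bigr => n _; rewrite exchange_big; apply: eq_bigr => h _.
under eq_bigr do rewrite exchange_big.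
rewrite exchange_big; apply: eq_bigr => xo _.
transitivity (\sum_(c : Cst) cv c * g x0 h y c * (pcY o F0 p piB piSb y x0 h xo
    * \sum_(r : rvec dx) qprime o F0 p piB piA piSb x0 h r xo)).
  by apply: eq_bigr => c _; rewrite !mulr_sumr; apply: eq_bigr => r _; ring.
by rewrite pcY_sum_qprime -mulr_suml mulrA.
Qed.

Lemma sum_PfullY_o y x0 h :
  \sum_(xo : pvec V dx) PfullY y x0 h xo =
  \sum_(x : fvec V dx) p x y * (restr F0 x == x0)%:R * (consistent x h)%:R.
Proof.
rewrite exchange_big; apply: eq_bigr => x _.
rewrite -(sum_indicator_mulr (restr o x)
  (fun=> p x y * (restr F0 x == x0)%:R * (consistent x h)%:R)).
by apply: eq_bigr => xo _; ring.
Qed.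

Lemma Jval_eq_traj : Jval N F0 p piA g cv = J_traj.
Proof.
rewrite /Jval exchange_big; apply: eq_bigr => y _.
under [RHS]eq_bigr => x0 _ do under eq_bigr => n _ do under eq_bigr => h _
  do rewrite -mulr_sumr sum_PfullY_o mulr_sumr.
under [RHS]eq_bigr => x0 _ do under eq_bigr => n _ do rewrite exchange_big.
under [RHS]eq_bigr => x0 _ do rewrite exchange_big.
rewrite [RHS]exchange_big; apply: eq_bigr => x _.
transitivity (\sum_(n < N.+1) \sum_(h : n.-tuple ('I_dx * V))
    expcost g cv (restr F0 x) h y * trajprob piA (restr F0 x) h
      * (p x y * (consistent x h)%:R)).
  rewrite /trajcost mulr_sumr; apply: eq_bigr => n _.
  rewrite big_mkcond mulr_sumr; apply: eq_bigr => h _.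
  by case: consistent => /=; ring.
rewrite -(sum_indicator_mulr (restr F0 x) (fun x0 => \sum_(n < N.+1)
  \sum_(h : n.-tuple ('I_dx * V)) expcost g cv x0 h y * trajprob piA x0 h
    * (p x y * (consistent x h)%:R))).
apply: eq_bigr => x0 _; rewrite mulr_sumr; apply: eq_bigr => n _.
by rewrite mulr_sumr; apply: eq_bigr => h _; ring.
Qed.

End SemiOfflineIdentification.

Theorem theorem3
  (R : realFieldType) (V Ylab Cst : finType) (dx N : nat) (o F0 : {set 'I_dx})
  (p : fvec V dx -> Ylab -> R)
  (piB : rvec dx -> fvec V dx -> R)
  (piA : pvec V dx -> hist V dx -> act dx -> R)
  (piS : pvec V dx -> hist V dx -> act dx -> R)
  (piSb : pvec V dx -> hist V dx -> rvec dx -> act dx -> R)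
  (g : pvec V dx -> hist V dx -> Ylab -> Cst -> R)
  (cv : Cst -> R)
  (p_ge0 : forall x y, 0 <= p x y)
  (p_sum1 : \sum_(x : fvec V dx) \sum_(y : Ylab) p x y = 1)
  (piB_ge0 : forall r x, 0 <= piB r x)
  (piB_sum1 : forall x, \sum_(r : rvec dx) piB r x = 1)
  (Xo_obs : forall x y r i, 0 < p x y -> 0 < piB r x -> i \in o -> r i)
  (MAR : forall r x x', 0 < \sum_(y : Ylab) p x y -> 0 < \sum_(y : Ylab) p x' y ->
           restr o x = restr o x' -> piB r x = piB r x')
  (piA_ge0 : forall x0 h a, 0 <= piA x0 h a)
  (piA_sum1 : forall x0 h, \sum_(a : act dx) piA x0 h a = 1)
  (piA_horizon : forall x0 h i, (N <= size h)%N -> piA x0 h (Some i) = 0)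
  (piS_ge0 : forall x0 h a, 0 <= piS x0 h a)
  (piS_sum1 : forall x0 h, \sum_(a : act dx) piS x0 h a = 1)
  (piSb_ge0 : forall x0 h r a, 0 <= piSb x0 h r a)
  (piSb_sum1 : forall x0 h r, \sum_(a : act dx) piSb x0 h r a = 1)
  (piSb_block : forall x0 h (r : rvec dx) i, r i = false -> piSb x0 h r (Some i) = 0)
  (piSb_pos : forall x0 h (r : rvec dx) (a : act dx), 0 < piS x0 h a ->
      (if a is Some i then r i else true) -> 0 < piSb x0 h r a)
  (offpol_pos : forall x0 h a, 0 < piA x0 h a -> 0 < piS x0 h a)
  (g_ge0 : forall x0 h y c, 0 <= g x0 h y c)
  (g_sum1 : forall x0 h y, \sum_(c : Cst) g x0 h y c = 1)
  (semioff_pos : forall (x0 : pvec V dx) (h : hist V dx) (xo : pvec V dx),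
      0 < trajprob piA x0 h * pfprod o F0 p x0 h xo * p_o o p xo ->
      0 < piB_ge o p piB (acquired h) xo) :
  Jval N F0 p piA g cv = Epo N F0 p piB piA g cv /\
  Epo N F0 p piB piA g cv = Jformula N o F0 p piB piA piSb g cv.
Proof.
split; first exact: Jval_eq_Epo.
rewrite -Jval_eq_Epo // (Jval_eq_traj N o).
by rewrite (Jformula_eq_traj _ _ _ p_ge0 piB_ge0 piB_sum1 MAR
  piA_ge0 piSb_ge0 piSb_pos offpol_pos semioff_pos).
Qed.
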